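(* Let $(\mathbb{E},\dot I,\dot\otimes,L,p)$ and $(\mathbb{F},\ddot I,\ddot\otimes,L',p')$ be weakly closed monoidal refinements of the same symmetric monoidal closed category $\mathbb{B}$, let $\mathcal{T}$ be a $\otimes$-strong monad on $\mathbb{B}$, let $(M,\le,1,\cdot)$ be a preordered monoid, and let $F:\mathbb{E}\to\mathbb{F}$ be a morphism of weakly closed monoidal refinements. Then post-composition $\Delta\mapsto F\circ\Delta$ restricts to a monotone function from $\mathbf{Asign}_{\dot\otimes}(\mathcal{T},M)$ (the $M$-graded $\dot\otimes$-parameterized assignments of $\mathbb{E}$ on $\mathcal{T}$) to $\mathbf{Asign}_{\ddot\otimes}(\mathcal{T},M)$ (the $M$-graded $\ddot\otimes$-parameterized assignments of $\mathbb{F}$ on $\mathcal{T}$).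
   Context: Let $(\mathbb{B},I,\otimes,\multimap)$ be a symmetric monoidal closed category with evaluation $ev$. A weakly closed monoidal refinement $(\mathbb{E},\dot I,\dot\otimes,L,p)$ of $\mathbb{B}$ is a symmetric monoidal category $(\mathbb{E},\dot I,\dot\otimes)$ with an adjunction $L\dashv p$, $p:\mathbb{E}\to\mathbb{B}$, such that: (a) $p$ is strict symmetric monoidal and faithful; (b) the unit of the adjunction is the identity; (c) for each $X\in\mathbb{B}$, $-\dot\otimes LX$ has a right adjoint $X\dot\pitchfork-$; (d) for each $X$, $(p,p)$ is a map of adjunctions from $(-\dot\otimes LX\dashv X\dot\pitchfork-)$ to $(-\otimes X\dashv X\multimap-)$. (A map of adjunctions $(F,G)$ from $\langle L,R,\eta\rangle:\mathbb{C}\rightharpoonup\mathbb{D}$ to $\langle L',R',\eta'\rangle:\mathbb{C}'\rightharpoonup\mathbb{D}'$ is a pair $F:\mathbb{C}\to\mathbb{C}'$, $G:\mathbb{D}\to\mathbb{D}'$ with $G\circ L=L'\circ F$, $F\circ R=R'\circ G$, $F\eta=\eta' F$.) Similarly for $(\mathbb{F},\ddot I,\ddot\otimes,L',p')$ with right adjoints $X\ddot\pitchfork-$. A morphism of weakly closed monoidal refinements is a functor $F:\mathbb{E}\to\mathbb{F}$ such that (1) $F$ is strict symmetric monoidal, (2) $(\mathrm{Id}_{\mathbb{B}},F)$ is a map of adjunctions $(L\dashv p)\to(L'\dashv p')$, and (3) for each $X\in\mathbb{B}$, $(F,F)$ is a map of adjunctions $(-\dot\otimes LX\dashv X\dot\pitchfork-)\to(-\ddot\otimes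 L'X\dashv X\ddot\pitchfork-)$. For $X,Y\in\mathbb{E}$ and $f\in\mathbb{B}(pX,pY)$, $f:X\dot\to Y$ means $f=p\dot f$ for some $\dot f\in\mathbb{E}(X,Y)$ (similarly for $\mathbb{F}$ with $p'$). $\mathcal{T}=(T,\eta,(-)^\dagger)$ is a monad on $\mathbb{B}$ with strength $\sigma$; for $f:X\otimes Y\to TZ$, $f^\ddagger=f^\dagger\circ\sigma$; $\mathrm{kl}_{X,Y}=(ev_{X,TY})^\ddagger:(X\multimap TY)\otimes TX\to TY$. For $F:A\to|\mathbb{B}|$, $\mathbf{Ord}(p,F)$ is the class of $G:A\to|\mathbb{E}|$ with $pG(a)=F(a)$, preordered by $G\le G'$ iff $\mathrm{id}_{F(a)}:G(a)\dot\to G'(a)$ for all $a$. An $M$-graded $\dot\otimes$-parameterized assignment of $\mathbb{E}$ on $\mathcal{T}$ is a monotone $\Delta:(M,\le)\to\mathbf{Ord}(p,T)$ with $\mathrm{kl}_{X,Y}:(X\dot\pitchfork\Delta\alpha Y)\dot\otimes\Delta\beta X\dot\to\Delta(\beta\cdot\alpha)Y$ for all $\alpha,\beta\in M$ and $X,Y\in\mathbb{B}$; likewise for $\mathbb{F}$. Both classes carry the pointwise preorder. *)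

From Stdlib Require Import Logic.FunctionalExtensionality.

Set Implicit Arguments.
Unset Strict Implicit.

Record Category := {
  Ob :> Type;
  Hom : Ob -> Ob -> Type;
  idm : forall x, Hom x x;
  comp : forall x y z, Hom y z -> Hom x y -> Hom x z;
  comp_id_l : forall x y (f : Hom x y), comp (idm y) f = f;
  comp_id_r : forall x y (f : Hom x y), comp f (idm x) = f;
  comp_assoc : forall x y z w (h : Hom z w) (g : Hom y z) (f : Hom x y),
      comp h (comp g f) = comp (comp h g) f
}.
Arguments Hom {c} _ _.
Arguments idm {c} x.
Arguments comp {c x y z} _ _.

Definition hom_cast (C : Category) (a a' b b' : Ob C) (ea : a = a') (eb : b = b')
  (f : Hom a b) : Hom a' b' :=
  match ea in _ = a0, eb in _ = b0 return Hom a0 b0 with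
  | eq_refl, eq_refl => f end.

Record Functor (C D : Category) := {
  fobj :> Ob C -> Ob D;
  fmap : forall x y, @Hom C x y -> @Hom D (fobj x) (fobj y);
  fmap_id : forall x, fmap (idm x) = idm (fobj x);
  fmap_comp : forall x y z (g : Hom y z) (f : Hom x y),
      fmap (comp g f) = comp (fmap g) (fmap f)
}.
Arguments fmap {C D} f0 {x y} _.

Definition faithful (C D : Category) (F : Functor C D) : Prop :=
  forall x y (f g : Hom x y), fmap F f = fmap F g -> f = g.

Definition IdF (C : Category) : Functor C C.
Proof.
  refine {| fobj := fun x => x; fmap := fun x y f => f |}; reflexivity.
Defined.

Definition FComp (C D E : Category) (G : Functor D E) (F : Functor C D) : Functor C E.
Proof.
  refine {| fobj := fun x => G (F x); fmap := fun x y f => fmap G (fmap F f) |}.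
  - intros x; rewrite !fmap_id; reflexivity.
  - intros x y z g f; rewrite !fmap_comp; reflexivity.
Defined.

Record NatTrans (C D : Category) (F G : Functor C D) := {
  ntc :> forall x, @Hom D (F x) (G x);
  nt_natural : forall x y (f : Hom x y),
      comp (ntc y) (fmap F f) = comp (fmap G f) (ntc x)
}.

Record Adjunction (C D : Category) (L : Functor C D) (R : Functor D C) := {
  adj_unit : NatTrans (IdF C) (FComp R L);
  adj_counit : NatTrans (FComp L R) (IdF D);
  adj_triangle_L : forall c, comp (adj_counit (L c)) (fmap L (adj_unit c)) = idm (L c);
  adj_triangle_R : forall d, comp (fmap R (adj_counit d)) (adj_unit (R d)) = idm (R d)
}.

(** map of adjunctions (F,G) from <L,R,eta> : C -> D to <L',R',eta'> : C' -> D':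
    G o L = L' o F,  F o R = R' o G  (equalities of functors) and F eta = eta' F. *)
Definition adj_map (C D C' D' : Category)
  (L : Functor C D) (R : Functor D C) (L' : Functor C' D') (R' : Functor D' C')
  (A : Adjunction L R) (A' : Adjunction L' R')
  (F : Functor C C') (G : Functor D D') : Prop :=
  exists (e1 : forall c, G (L c) = L' (F c)) (e2 : forall d, F (R d) = R' (G d)),
    (forall c c' (f : Hom c c'),
        hom_cast (e1 c) (e1 c') (fmap G (fmap L f)) = fmap L' (fmap F f)) /\
    (forall d d' (g : Hom d d'),
        hom_cast (e2 d) (e2 d') (fmap F (fmap R g)) = fmap R' (fmap G g)) /\
    (forall c, hom_cast eq_refl (eq_trans (e2 (L c)) (f_equal R' (e1 c)))
                 (fmap F (adj_unit A c)) = adj_unit A' (F c)).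

Definition ProdCat (C D : Category) : Category.
Proof.
  refine {| Ob := (Ob C * Ob D)%type;
            Hom := fun a b => (@Hom C (fst a) (fst b) * @Hom D (snd a) (snd b))%type;
            idm := fun a => (idm (fst a), idm (snd a));
            comp := fun a b c g f => (comp (fst g) (fst f), comp (snd g) (snd f)) |}.
  - intros [] [] []; simpl; rewrite !comp_id_l; reflexivity.
  - intros [] [] []; simpl; rewrite !comp_id_r; reflexivity.
  - intros [] [] [] [] [] [] []; simpl; rewrite !comp_assoc; reflexivity.
Defined.

Definition is_iso (C : Category) (x y : Ob C) (f : Hom x y) : Prop :=
  exists g : Hom y x, comp g f = idm x /\ comp f g = idm y.

Record SymMonoidal (C : Category) := {
  tens : Functor (ProdCat C C) C;
  munit : Ob C;
  m_assoc : forall a b c : Ob C, Hom (tens (tens (a, b), c)) (tens (a, tens (b, c)));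
  m_lunit : forall a : Ob C, Hom (tens (munit, a)) a;
  m_runit : forall a : Ob C, Hom (tens (a, munit)) a;
  m_sym : forall a b : Ob C, Hom (tens (a, b)) (tens (b, a));
  m_assoc_iso : forall a b c, is_iso (m_assoc a b c);
  m_lunit_iso : forall a, is_iso (m_lunit a);
  m_runit_iso : forall a, is_iso (m_runit a);
  m_assoc_nat : forall a a' b b' c c' (f : Hom a a') (g : Hom b b') (h : Hom c c'),
      comp (m_assoc a' b' c') (@fmap _ _ tens (_, _) (_, _) (@fmap _ _ tens (_, _) (_, _) (f, g), h))
      = comp (@fmap _ _ tens (_, _) (_, _) (f, @fmap _ _ tens (_, _) (_, _) (g, h))) (m_assoc a b c);
  m_lunit_nat : forall a a' (f : Hom a a'),
      comp (m_lunit a') (@fmap _ _ tens (_, _) (_, _) (idm munit, f)) = comp f (m_lunit a);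
  m_runit_nat : forall a a' (f : Hom a a'),
      comp (m_runit a') (@fmap _ _ tens (_, _) (_, _) (f, idm munit)) = comp f (m_runit a);
  m_sym_nat : forall a a' b b' (f : Hom a a') (g : Hom b b'),
      comp (m_sym a' b') (@fmap _ _ tens (_, _) (_, _) (f, g))
      = comp (@fmap _ _ tens (_, _) (_, _) (g, f)) (m_sym a b);
  m_pentagon : forall a b c d,
      comp (m_assoc a b (tens (c, d))) (m_assoc (tens (a, b)) c d)
      = comp (@fmap _ _ tens (_, _) (_, _) (idm a, m_assoc b c d))
          (comp (m_assoc a (tens (b, c)) d)
                (@fmap _ _ tens (_, _) (_, _) (m_assoc a b c, idm d)));
  m_triangle : forall a b,
      comp (@fmap _ _ tens (_, _) (_, _) (idm a, m_lunit b)) (m_assoc a munit b)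
      = @fmap _ _ tens (_, _) (_, _) (m_runit a, idm b);
  m_hexagon : forall a b c,
      comp (m_assoc b c a) (comp (m_sym a (tens (b, c))) (m_assoc a b c))
      = comp (@fmap _ _ tens (_, _) (_, _) (idm b, m_sym a c))
          (comp (m_assoc b a c) (@fmap _ _ tens (_, _) (_, _) (m_sym a b, idm c)));
  m_sym_inv : forall a b, comp (m_sym b a) (m_sym a b) = idm (tens (a, b))
}.

Definition tensO (C : Category) (M : SymMonoidal C) (a b : Ob C) : Ob C := tens M (a, b).
Definition tensH (C : Category) (M : SymMonoidal C) (a a' b b' : Ob C)
  (f : Hom a a') (g : Hom b b') : Hom (tensO M a b) (tensO M a' b') :=
  @fmap _ _ (tens M) (a, b) (a', b') (f, g).
Arguments tensH {C} M {a a' b b'} f g.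

Definition tensR (C : Category) (M : SymMonoidal C) (X : Ob C) : Functor C C.
Proof.
  refine {| fobj := fun a => tensO M a X; fmap := fun a b f => tensH M f (idm X) |}.
  - intros a; unfold tensH; exact (@fmap_id _ _ (tens M) (a, X)).
  - intros a b c g f; unfold tensH.
    pose proof (@fmap_comp _ _ (tens M) (a, X) (b, X) (c, X) (g, idm X) (f, idm X)) as H.
    simpl in H; rewrite comp_id_l in H; exact H.
Defined.

Record Closed (C : Category) (M : SymMonoidal C) := {
  ihom : Ob C -> Functor C C;
  closed_adj : forall X, Adjunction (tensR M X) (ihom X)
}.

Definition ev (C : Category) (M : SymMonoidal C) (CC : Closed M) (X Y : Ob C)
  : Hom (tensO M (ihom CC X Y) X) Y :=
  adj_counit (closed_adj CC X) Y.

Definition strict_sym_monoidal (C D : Category) (MC : SymMonoidal C) (MD : SymMonoidal D)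
  (F : Functor C D) : Prop :=
  exists (eI : F (munit MC) = munit MD)
         (et : forall a b, F (tensO MC a b) = tensO MD (F a) (F b)),
    (forall a a' b b' (f : Hom a a') (g : Hom b b'),
        hom_cast (et a b) (et a' b') (fmap F (tensH MC f g)) = tensH MD (fmap F f) (fmap F g)) /\
    (forall a b c,
        hom_cast (eq_trans (et (tensO MC a b) c) (f_equal (fun z => tensO MD z (F c)) (et a b)))
                 (eq_trans (et a (tensO MC b c)) (f_equal (tensO MD (F a)) (et b c)))
                 (fmap F (m_assoc MC a b c))
        = m_assoc MD (F a) (F b) (F c)) /\
    (forall a,
        hom_cast (eq_trans (et (munit MC) a) (f_equal (fun z => tensO MD z (F a)) eI)) eq_refl
                 (fmap F (m_lunit MC a)) = m_lunit MD (F a)) /\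
    (forall a,
        hom_cast (eq_trans (et a (munit MC)) (f_equal (tensO MD (F a)) eI)) eq_refl
                 (fmap F (m_runit MC a)) = m_runit MD (F a)) /\
    (forall a b,
        hom_cast (et a b) (et b a) (fmap F (m_sym MC a b)) = m_sym MD (F a) (F b)).

Record WCMRefinement (B : Category) (MB : SymMonoidal B) (CB : Closed MB) := {
  rE : Category;
  rM : SymMonoidal rE;
  rL : Functor B rE;
  rp : Functor rE B;
  r_adj : Adjunction rL rp;
  r_strict : strict_sym_monoidal rM MB rp;
  r_faithful : faithful rp;
  r_unit_id : exists e : forall X, rp (rL X) = X,
      forall X, hom_cast eq_refl (e X) (adj_unit r_adj X) = idm X;
  r_pitch : Ob B -> Functor rE rE;
  r_pitch_adj : forall X, Adjunction (tensR rM (rL X)) (r_pitch X);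
  r_map : forall X, adj_map (r_pitch_adj X) (closed_adj CB X) rp rp
}.

Definition refinement_morphism (B : Category) (MB : SymMonoidal B) (CB : Closed MB)
  (R1 R2 : WCMRefinement CB) (F : Functor (rE R1) (rE R2)) : Prop :=
  strict_sym_monoidal (rM R1) (rM R2) F /\
  adj_map (r_adj R1) (r_adj R2) (IdF B) F /\
  (forall X, adj_map (r_pitch_adj R1 X) (r_pitch_adj R2 X) F F).

Record StrongMonad (B : Category) (MB : SymMonoidal B) := {
  T : Ob B -> Ob B;
  ret : forall X, Hom X (T X);
  bind : forall X Y, Hom X (T Y) -> Hom (T X) (T Y);
  bind_ret : forall X, bind (ret X) = idm (T X);
  ret_bind : forall X Y (f : Hom X (T Y)), comp (bind f) (ret X) = f;
  bind_bind : forall X Y Z (f : Hom X (T Y)) (g : Hom Y (T Z)),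
      bind (comp (bind g) f) = comp (bind g) (bind f);
  str : forall X Y, Hom (tensO MB X (T Y)) (T (tensO MB X Y));
  (* naturality; T acts on morphisms by  T g = (ret o g)^dagger *)
  str_nat : forall X X' Y Y' (f : Hom X X') (g : Hom Y Y'),
      comp (str X' Y') (tensH MB f (bind (comp (ret Y') g)))
      = comp (bind (comp (ret _) (tensH MB f g))) (str X Y);
  str_lunit : forall Y,
      comp (bind (comp (ret Y) (m_lunit MB Y))) (str (munit MB) Y) = m_lunit MB (T Y);
  str_assoc : forall X Y Z,
      comp (bind (comp (ret _) (m_assoc MB X Y Z))) (str (tensO MB X Y) Z)
      = comp (str X (tensO MB Y Z)) (comp (tensH MB (idm X) (str Y Z)) (m_assoc MB X Y (T Z)));
  str_ret : forall X Y, comp (str X Y) (tensH MB (idm X) (ret Y)) = ret (tensO MB X Y);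
  str_bind : forall X Y Z (f : Hom Y (T Z)),
      comp (str X Z) (tensH MB (idm X) (bind f))
      = comp (bind (comp (str X Z) (tensH MB (idm X) f))) (str X Y)
}.
Arguments bind {B MB} s {X Y} f.

Definition ddag (B : Category) (MB : SymMonoidal B) (TT : StrongMonad MB) (X Y Z : Ob B)
  (f : Hom (tensO MB X Y) (T TT Z)) : Hom (tensO MB X (T TT Y)) (T TT Z) :=
  comp (bind TT f) (str TT X Y).

Definition kl (B : Category) (MB : SymMonoidal B) (CB : Closed MB) (TT : StrongMonad MB)
  (X Y : Ob B) : Hom (tensO MB (ihom CB X (T TT Y)) (T TT X)) (T TT Y) :=
  ddag (ev CB X (T TT Y)).

Record PreordMonoid := {
  pm_car :> Type;
  pm_le : pm_car -> pm_car -> Prop;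
  pm_le_refl : forall a, pm_le a a;
  pm_le_trans : forall a b c, pm_le a b -> pm_le b c -> pm_le a c;
  pm_one : pm_car;
  pm_mul : pm_car -> pm_car -> pm_car;
  pm_mulA : forall a b c, pm_mul a (pm_mul b c) = pm_mul (pm_mul a b) c;
  pm_mul1l : forall a, pm_mul pm_one a = a;
  pm_mul1r : forall a, pm_mul a pm_one = a;
  pm_mul_mono : forall a a' b b', pm_le a a' -> pm_le b b' -> pm_le (pm_mul a b) (pm_mul a' b')
}.

Definition over (B : Category) (MB : SymMonoidal B) (CB : Closed MB) (R : WCMRefinement CB)
  (X Y : Ob (rE R)) (a b : Ob B) (f : Hom a b) : Prop :=
  exists (g : Hom X Y) (ea : rp R X = a) (eb : rp R Y = b),
    hom_cast ea eb (fmap (rp R) g) = f.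
Arguments over {B MB CB} R X Y {a b} f.

(** Asign(T,M) for the refinement R: M-graded parameterized assignments
    Delta : M -> Ord(p,T),  Delta alpha : |B| -> |E| with p (Delta alpha X) = T X *)
Definition is_asg (B : Category) (MB : SymMonoidal B) (CB : Closed MB) (R : WCMRefinement CB)
  (TT : StrongMonad MB) (M : PreordMonoid) (D : M -> Ob B -> Ob (rE R)) : Prop :=
  (forall (a : M) X, rp R (D a X) = T TT X) /\
  (forall a b : M, pm_le a b -> forall X, over R (D a X) (D b X) (idm (T TT X))) /\
  (forall (a b : M) (X Y : Ob B),
      over R (tensO (rM R) (r_pitch R X (D a Y)) (D b X)) (D (pm_mul b a) Y) (kl CB TT X Y)).

Definition asg_le (B : Category) (MB : SymMonoidal B) (CB : Closed MB) (R : WCMRefinement CB)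
  (TT : StrongMonad MB) (M : PreordMonoid) (D D' : M -> Ob B -> Ob (rE R)) : Prop :=
  forall (a : M) X, over R (D a X) (D' a X) (idm (T TT X)).
Arguments refinement_morphism {B MB CB} R1 R2 F.
Arguments is_asg {B MB CB} R TT M D.
Arguments asg_le {B MB CB} R TT M D D'.

(* A morphism F of refinements lies over the identity of B (p' o F = p, also on
   morphisms), so it carries every witness of  f : X -.-> Y  in E to a witness
   of  f : F X -.-> F Y  in F.  Being strict monoidal and commuting with the
   right adjoints X pitchfork -, F also maps the object on which kl must be
   refined, (X pitchfork Delta a Y) (x) Delta b X, to its counterpart built
   from F o Delta, so all three conditions on an assignment transfer. *)

Lemma hom_cast_trans (C : Category) (x y x' y' a b : Ob C) (e : x = x') (e' : y = y')
  (ea : x = a) (eb : y = b) (h : Hom x y) :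
  hom_cast (eq_trans (eq_sym e) ea) (eq_trans (eq_sym e') eb) (hom_cast e e' h)
  = hom_cast ea eb h.
Proof. destruct e, e', ea, eb; reflexivity. Qed.

Section RefinementMorphism.

Variables (B : Category) (MB : SymMonoidal B) (CB : Closed MB).
Variables (R1 R2 : WCMRefinement CB) (F : Functor (rE R1) (rE R2)).

Lemma rp_adj_map (HF : adj_map (r_adj R1) (r_adj R2) (IdF B) F) (X : Ob (rE R1)) :
  rp R2 (F X) = rp R1 X.
Proof. destruct HF as [_ [e2 _]]; symmetry; exact (e2 X). Qed.

Lemma over_adj_map (HF : adj_map (r_adj R1) (r_adj R2) (IdF B) F)
  (X Y : Ob (rE R1)) (a b : Ob B) (f : Hom a b) :
  over R1 X Y f -> over R2 (F X) (F Y) f.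
Proof.
  destruct HF as [_ [e2 [_ [Hmap _]]]].
  intros [g [ea [eb <-]]].
  exists (fmap F g), (eq_trans (eq_sym (e2 X)) ea), (eq_trans (eq_sym (e2 Y)) eb).
  rewrite <- (Hmap X Y g).
  apply hom_cast_trans.
Qed.

Lemma refinement_morphism_tens_pitch (HF : refinement_morphism R1 R2 F)
  (X : Ob B) (A A' : Ob (rE R1)) :
  F (tensO (rM R1) (r_pitch R1 X A) A')
  = tensO (rM R2) (r_pitch R2 X (F A)) (F A').
Proof.
  destruct HF as [[_ [et _]] [_ Hpitch]].
  destruct (Hpitch X) as [_ [ep _]].
  rewrite et; simpl in ep; rewrite ep; reflexivity.
Qed.

Variables (TT : StrongMonad MB) (M : PreordMonoid).

Lemma is_asg_refinement_morphism (HF : refinement_morphism R1 R2 F)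
  (D : M -> Ob B -> Ob (rE R1)) :
  is_asg R1 TT M D -> is_asg R2 TT M (fun a X => F (D a X)).
Proof.
  pose proof (proj1 (proj2 HF)) as Hp.
  intros [Hfib [Hmono Hkl]]; split; [|split].
  - intros a X; rewrite rp_adj_map; auto.
  - intros a b Hab X; apply over_adj_map; auto.
  - intros a b X Y.
    rewrite <- refinement_morphism_tens_pitch by exact HF.
    apply over_adj_map; auto.
Qed.

Lemma asg_le_adj_map (HF : adj_map (r_adj R1) (r_adj R2) (IdF B) F)
  (D D' : M -> Ob B -> Ob (rE R1)) :
  asg_le R1 TT M D D' -> asg_le R2 TT M (fun a X => F (D a X)) (fun a X => F (D' a X)).
Proof. intros Hle a X; apply over_adj_map; auto. Qed.

End RefinementMorphism.

Theorem theorem4 (B : Category) (MB : SymMonoidal B) (CB : Closed MB)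
  (R1 R2 : WCMRefinement CB) (TT : StrongMonad MB) (M : PreordMonoid)
  (F : Functor (rE R1) (rE R2)) (HF : refinement_morphism R1 R2 F) :
  (forall D : M -> Ob B -> Ob (rE R1),
      is_asg R1 TT M D -> is_asg R2 TT M (fun a X => F (D a X))) /\
  (forall D D' : M -> Ob B -> Ob (rE R1),
      is_asg R1 TT M D -> is_asg R1 TT M D' -> asg_le R1 TT M D D' ->
      asg_le R2 TT M (fun a X => F (D a X)) (fun a X => F (D' a X))).
Proof.
  split.
  - apply is_asg_refinement_morphism, HF.
  - intros D D' _ _; apply asg_le_adj_map, (proj1 (proj2 HF)).
Qed.
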